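(* Let $\mathcal{G}=(\mathcal{V},\mathcal{E})$ be a directed graph with terminals $s,t$ and $f:2^{\mathcal{E}}\to\mathbb{R}_+$ normalized, monotone nondecreasing and submodular. Then minimum $(s,t)$-cut with cost function $\hat f_{\mathrm{pf}}$ is dual to the polymatroidal network flow with capacities $\mathrm{cap}^{\mathrm{in}}_v=f|_{\delta^-(v)}$ and $\mathrm{cap}^{\mathrm{out}}_v=f|_{\delta^+(v)}$ at each node $v\in\mathcal{V}$; that is, the minimum of $\hat f_{\mathrm{pf}}(C)$ over $(s,t)$-cuts $C$ equals the maximum value of a polymatroidal $(s,t)$-flow with these capacities.
   Context: An $(s,t)$-cut is a set of edges whose removal disconnects all $s$-$t$ paths. For $C\subseteq\mathcal{E}$, let $\mathcal{P}_C$ be the family of all partitions $\Pi(C)=\{C^\Pi_v\}_{v\in\mathcal{V}}$ of $C$ obtained by assigning each edge $(u,w)\in C$ either to its tail $u$ or to its head $w$ ($C^\Pi_v$ is the set of edges assigned to $v$, possibly empty), and define $\hat f_{\mathrm{pf}}(C)=\min_{\Pi(C)\in\mathcal{P}_C}\sum_{v\in\mathcal{V}} f(C^\Pi_v)$. A polymatroidal $(s,t)$-flow is $\varphi:\mathcal{E}\to\mathbb{R}_+$ such that inflow equals outflow at every $v\notin\{s,t\}$ and, for every node $v$, $\sum_{e\in A}\varphi(e)\le \mathrm{cap}^{\mathrm{in}}_v(A)$ for all $A\subseteq\delta^-(v)$ (edges entering $v$) and $\sum_{e\in A}\varphi(e)\le \mathrm{cap}^{\mathrm{out}}_v(A)$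 for all $A\subseteq\delta^+(v)$ (edges leaving $v$); its value is the net outflow at $s$. $f|_A$ denotes the restriction of $f$ to subsets of $A$. *)

From HB Require Import structures.
From mathcomp Require Import all_boot all_order all_algebra.
From mathcomp Require Import reals.
Set Implicit Arguments. Unset Strict Implicit. Unset Printing Implicit Defensive.
Import Order.TTheory GRing.Theory Num.Theory.
Local Open Scope ring_scope.

Section Defs.
Variables (V E : finType) (tail head : E -> V).

Definition delta_in (v : V) : {set E} := [set e | head e == v].
Definition delta_out (v : V) : {set E} := [set e | tail e == v].

Definition adj_minus (C : {set E}) : rel V :=
  fun u w => [exists e, [&& e \notin C, tail e == u & head e == w]].

Definition is_st_cut (s t : V) (C : {set E}) : bool :=
  ~~ connect (adj_minus C) s t.

Variable R : realType.
Variable f : {set E} -> R.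

(* an assignment a : E -> bool sends edge e to its tail (true) or head (false);
   C^Pi_v = edges of C assigned to v *)
Definition part_block (C : {set E}) (a : {ffun E -> bool}) (v : V) : {set E} :=
  [set e in C | if a e then tail e == v else head e == v].

Definition part_cost (C : {set E}) (a : {ffun E -> bool}) : R :=
  \sum_(v : V) f (part_block C a v).

(* \hat f_pf (C) = min over all partitions of C (assignments; the values of
   a outside C are irrelevant) *)
Definition f_pf (C : {set E}) : R :=
  \big[Order.min/part_cost C [ffun => true]]_(a : {ffun E -> bool}) part_cost C a.

Definition normalized := f set0 = 0.
Definition nonneg_fun := forall A, 0 <= f A.
Definition monotone_fun := forall A B : {set E}, A \subset B -> f A <= f B.
Definition submodular := forall A B : {set E}, f (A :|: B) + f (A :&: B) <= f A + f B.

Definition is_polymatroidal_flow (s t : V) (phi : E -> R) : Prop :=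
  [/\ forall e, 0 <= phi e,
      forall v, v != s -> v != t ->
        \sum_(e in delta_in v) phi e = \sum_(e in delta_out v) phi e,
      forall v (A : {set E}), A \subset delta_in v -> \sum_(e in A) phi e <= f A
    & forall v (A : {set E}), A \subset delta_out v -> \sum_(e in A) phi e <= f A].

Definition flow_value (s : V) (phi : E -> R) : R :=
  \sum_(e in delta_out s) phi e - \sum_(e in delta_in s) phi e.

End Defs.

(* Weak duality: if C is a cut and S the set of vertices reachable from s
   avoiding C, the value of a flow is at most its total on the edges leaving S,
   which lie in C; in any partition of C each block consists of edges entering
   or leaving one vertex, so its flow is bounded by f of the block.

   Strong duality: a maximum flow exists by compactness.  By submodularity the
   sets on which a capacity constraint is tight are closed under union and
   intersection, so every saturated edge has a least tight set containing it.
   This defines a residual graph on forward and backward uses of edges; an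
   s-t path in it would allow a small multiple of its net use to be added to
   the flow, so for a maximum flow the edges leaving the vertices reached by
   residual paths form a cut.  Charging each cut edge to its tail or head
   according to the tight sets generated by reachable arcs puts every block in
   a tight set with no flow outside the block, hence the block costs at most
   its flow and this cut costs at most the flow value. *)

From HB Require Import structures.
From mathcomp Require Import all_boot all_order all_algebra.
From mathcomp Require Import reals lra.
From mathcomp Require classical_sets boolp functions topology normedtype derive.
Set Implicit Arguments. Unset Strict Implicit. Unset Printing Implicit Defensive.
Import Order.TTheory GRing.Theory Num.Theory.
Local Open Scope ring_scope.

Lemma sum_setUI (M : nmodType) (T : finType) (F : T -> M) (A B : {set T}) :
  \sum_(i in A :|: B) F i + \sum_(i in A :&: B) F i =
  \sum_(i in A) F i + \sum_(i in B) F i.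
Proof.
rewrite (big_setID (A := A :|: B) A) (big_setID (A := B) A) /=.
rewrite (setIidPr (subsetUl A B)) setDUl setDv set0U [B :&: A]setIC.
by rewrite -addrA [X in _ + X]addrC.
Qed.

Lemma exists_pos_lower_bound (R : realDomainType) (I : finType) (F : I -> R) :
  exists2 m : R, 0 < m & forall i, 0 < F i -> m <= F i.
Proof.
exists (\big[Order.min/1]_i (if 0 < F i then F i else 1)).
  by apply: lt_bigmin => // i _; case: ifP.
by move=> i Fi; apply: le_trans (bigmin_le _ i _) _; rewrite Fi.
Qed.

Lemma exists_small_scale (R : realFieldType) (D m : R) : 0 < m ->
  exists2 eps : R, 0 < eps & forall x, `|x| <= D -> eps * x <= m.
Proof.
move=> m0; have D1 : 0 < `|D| + 1 by rewrite ltr_wpDl.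
have eps0 : 0 < m / (`|D| + 1) by exact: divr_gt0.
exists (m / (`|D| + 1)) => // x xD.
apply: le_trans (_ : m / (`|D| + 1) * `|x| <= m).
  by apply: ler_wpM2l; [exact: ltW | exact: ler_norm].
rewrite mulrAC ler_pdivrMr // ler_pM2l //.
by apply: le_trans xD _; apply: le_trans (ler_norm D) _; rewrite lerDl.
Qed.

Lemma perturb_feasible (R : realFieldType) (E : finType) (f : {set E} -> R)
    (phi d : E -> R) :
  (forall e, 0 <= phi e) -> (forall e, d e < 0 -> 0 < phi e) ->
  exists2 eps : R, 0 < eps &
    (forall e, 0 <= phi e + eps * d e) /\
    (forall A : {set E}, \sum_(e in A) phi e <= f A ->
       (\sum_(e in A) phi e = f A -> \sum_(e in A) d e <= 0) ->
       \sum_(e in A) (phi e + eps * d e) <= f A).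
Proof.
move=> phi0 d_neg.
have [m1 m1_gt0 m1_le] := exists_pos_lower_bound (fun A => f A - \sum_(e in A) phi e).
have [m2 m2_gt0 m2_le] := exists_pos_lower_bound phi.
have m_gt0 : 0 < Order.min m1 m2 by rewrite lt_min m1_gt0.
have [eps eps_gt0 eps_small] := exists_small_scale (\sum_e `|d e|) m_gt0.
have sum_small (A : {set E}) : `|\sum_(e in A) d e| <= \sum_e `|d e|.
  apply: le_trans (ler_norm_sum _ _ _) _; rewrite [leRHS](bigID (mem A)) lerDl.
  by apply: sumr_ge0 => *; exact: normr_ge0.
have m_m1 : Order.min m1 m2 <= m1 by rewrite ge_min lexx.
have m_m2 : Order.min m1 m2 <= m2 by rewrite ge_min lexx orbT.
exists eps => //; split=> [e|A capA tightA].
  have [d_ge0|d_lt0] := leP 0 (d e).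
    by have := phi0 e; have := mulr_ge0 (ltW eps_gt0) d_ge0; lra.
  have de : `|- d e| <= \sum_e `|d e|.
    by rewrite normrN; have := sum_small [set e]; rewrite big_set1.
  by have := m2_le _ (d_neg _ d_lt0); have := eps_small _ de; rewrite mulrN; lra.
rewrite big_split -mulr_sumr /=.
have [eqA|slackA] := eqVneq (\sum_(e in A) phi e) (f A).
  by rewrite eqA gerDl pmulr_rle0 // tightA.
have : 0 < f A - \sum_(e in A) phi e by rewrite subr_gt0 lt_neqAle slackA capA.
by move=> /m1_le; have := eps_small _ (sum_small A); lra.
Qed.

Lemma sum_path_telescope (M : zmodType) (T : Type) (step : rel T) (u w : T -> M)
    (x : T) (p : seq T) :
  (forall y z, step y z -> w y = u z) -> path step x p ->
  \sum_(z <- x :: p) (w z - u z) = w (last x p) - u x.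
Proof.
move=> wu; elim: p x => [|y p IH] x /=; first by rewrite big_seq1.
by case/andP=> /wu sxy /IH; rewrite big_cons => ->; rewrite sxy addrC addrA subrK.
Qed.

Section MatchedSums.
Variables (R : realDomainType) (T : Type) (step : rel T) (F B : pred T).

Local Notation weight z := ((F z)%:R - (B z)%:R : R).

Lemma sum_matched_forward x p :
  (forall y z, step y z -> F y -> B z) -> path step x p -> ~~ F (last x p) ->
  \sum_(z <- x :: p) weight z <= 0.
Proof.
move=> FB; suff : path step x p -> ~~ F (last x p) ->
    \sum_(z <- x :: p) weight z <= - (B x)%:R.
  by move=> H /H{}H /H{}H; apply: le_trans H _; rewrite oppr_le0.
elim: p x => [|y p IH] x /=; first by move=> _ /negbTE Fx; rewrite big_seq1 Fx sub0r.
case/andP=> sxy py ly; rewrite big_cons; have {py ly}IHy := IH y py ly.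
case Fx: (F x).
  by move: IHy; rewrite (FB _ _ sxy Fx); case: (B x); rewrite /= ?mulr0n ?mulr1n; lra.
by move: IHy; case: (B x); case: (B y); rewrite /= ?mulr0n ?mulr1n; lra.
Qed.

Lemma sum_matched_backward x p :
  (forall y z, step y z -> F z -> B y) -> path step x p -> ~~ F x ->
  \sum_(z <- x :: p) weight z <= 0.
Proof.
move=> FB; suff : path step x p -> \sum_(z <- p) weight z <= (B x)%:R.
  by move=> H /H{}H /negbTE Fx; rewrite big_cons Fx sub0r addrC subr_le0.
elim: p x => [|y p IH] x /=; first by rewrite big_nil.
case/andP=> sxy /IH{}IH; rewrite big_cons.
apply: le_trans (_ : (F y)%:R <= _).
  by move: IH; case: (F y); case: (B y); rewrite /= ?mulr0n ?mulr1n; lra.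
by case Fy: (F y); rewrite ?(FB _ _ sxy Fy).
Qed.

End MatchedSums.

(** * Cuts and weak duality *)

Section Cuts.
Variables (V E : finType) (tail head : E -> V).

Definition fiber (g : E -> V) (v : V) : {set E} := [set e | g e == v].
Definition edges_out (S : {set V}) : {set E} :=
  [set e | (tail e \in S) && (head e \notin S)].
Definition edges_in (S : {set V}) : {set E} :=
  [set e | (tail e \notin S) && (head e \in S)].

Lemma edges_out_cut (s t : V) (S : {set V}) :
  s \in S -> t \notin S -> is_st_cut tail head s t (edges_out S).
Proof.
move=> sS tS; apply/negP => /connectP [p]; elim: p s sS => [|w p IH] u uS /=.
  by move=> _ tu; move: tS; rewrite tu uS.
case/andP=> /existsP [e /and3P [eC /eqP eu /eqP ew]] wp; apply: IH wp.
by move: eC; rewrite inE eu uS ew negbK.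
Qed.

Lemma cut_separation (s t : V) (C : {set E}) : is_st_cut tail head s t C ->
  exists S : {set V}, [/\ s \in S, t \notin S & edges_out S \subset C].
Proof.
move=> cutC; exists [set v | connect (adj_minus tail head C) s v].
rewrite !inE connect0; split=> //; apply/subsetP => e; rewrite !inE.
case/andP=> se; apply: contraNT => eC; apply: connect_trans se (connect1 _).
by apply/existsP; exists e; rewrite eC !eqxx.
Qed.

Lemma sum_part_block (M : nmodType) (C : {set E}) (a : {ffun E -> bool})
    (phi : E -> M) :
  \sum_(e in C) phi e = \sum_v \sum_(e in part_block tail head C a v) phi e.
Proof.
rewrite (partition_big (fun e => if a e then tail e else head e) xpredT) //=.
by apply: eq_bigr => v _; apply: eq_bigl => e; rewrite inE; case: (a e).
Qed.

Lemma part_block_edges_out (S : {set V}) (a : {ffun E -> bool}) (v : V) :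
  part_block tail head (edges_out S) a v \subset
  fiber (if v \in S then tail else head) v.
Proof.
apply/subsetP => e; rewrite !inE => /andP [/andP [tS hS]].
by case: (a e) => /eqP ev; rewrite -ev ?tS ?(negbTE hS) eqxx.
Qed.

Lemma sum_fibers (M : nmodType) (g : E -> V) (S : {set V}) (phi : E -> M) :
  \sum_(v in S) \sum_(e in fiber g v) phi e = \sum_(e | g e \in S) phi e.
Proof.
rewrite [RHS](partition_big g (mem S)) //=; apply: eq_bigr => v vS.
by apply: eq_bigl => e; rewrite inE andbC; case: eqP => // ->.
Qed.

End Cuts.

Section Flows.
Variables (R : realType) (V E : finType) (tail head : E -> V) (s t : V)
  (f : {set E} -> R).

Local Notation flow := (is_polymatroidal_flow tail head f s t).
Local Notation value := (flow_value tail head s).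
Local Notation edges_out := (edges_out tail head).
Local Notation edges_in := (edges_in tail head).

Lemma flow_cap_in (phi : E -> R) (v : V) (A : {set E}) :
  flow phi -> A \subset fiber head v -> \sum_(e in A) phi e <= f A.
Proof. by case=> _ _ + _; apply. Qed.

Lemma flow_cap_out (phi : E -> R) (v : V) (A : {set E}) :
  flow phi -> A \subset fiber tail v -> \sum_(e in A) phi e <= f A.
Proof. by case=> _ _ _; apply. Qed.

Lemma flow_value_across (phi : E -> R) (S : {set V}) :
  flow phi -> s \in S -> t \notin S ->
  value phi = \sum_(e in edges_out S) phi e - \sum_(e in edges_in S) phi e.
Proof.
case=> _ conserve _ _ sS tS.
have -> : value phi = \sum_(v in S)
    (\sum_(e in fiber tail v) phi e - \sum_(e in fiber head v) phi e).
  rewrite (bigD1 s) //= [X in _ + X]big1 ?addr0 // => v /andP [vS vs].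
  by rewrite conserve ?subrr //; apply: contraNneq tS => <-.
rewrite sumrB !sum_fibers (bigID (fun e => head e \in S)) /=.
rewrite [X in _ - X](bigID (fun e => tail e \in S)) /=.
rewrite [X in _ - (X + _)](eq_bigl (fun e => (tail e \in S) && (head e \in S))).
  rewrite opprD addrACA subrr add0r.
  by congr (_ - _); apply: eq_bigl => e; rewrite inE // andbC.
by move=> e; rewrite andbC.
Qed.

Hypothesis f_mono : monotone_fun f.

Lemma weak_duality (phi : E -> R) (C : {set E}) :
  flow phi -> is_st_cut tail head s t C -> value phi <= f_pf tail head f C.
Proof.
move=> fl /cut_separation [S [sS tS SC]].
have out_le a : \sum_(e in edges_out S) phi e <= part_cost tail head f C a.
  rewrite (sum_part_block tail head _ a) /part_cost; apply: ler_sum => v _.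
  have sub : part_block tail head (edges_out S) a v \subset part_block tail head C a v.
    apply/subsetP => e; rewrite !inE => /andP [eS ->].
    by rewrite andbT; apply: (subsetP SC); rewrite inE.
  apply: le_trans (f_mono sub); have := part_block_edges_out tail head S a v.
  by case: (v \in S) => sub'; [apply: flow_cap_out sub' | apply: flow_cap_in sub'].
apply: le_bigmin => [|a _]; apply: le_trans (out_le _).
all: rewrite (flow_value_across fl sS tS) lerBlDr lerDl.
all: by apply: sumr_ge0 => e _; case: fl.
Qed.

End Flows.

(** * Tight sets *)

Section TightSets.
Variables (R : realType) (E : finType) (f : {set E} -> R) (phi : E -> R).

Definition tight (D A : {set E}) : bool :=
  (A \subset D) && (\sum_(e in A) phi e == f A).
Definition slack (D : {set E}) (e : E) : bool :=
  [forall A : {set E}, tight D A ==> (e \notin A)].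
Definition dep_set (D : {set E}) (e : E) : {set E} :=
  D :&: \bigcap_(A | tight D A && (e \in A)) A.

Lemma tight_sub (D A : {set E}) : tight D A -> A \subset D.
Proof. by case/andP. Qed.

Lemma slack_tight (D A : {set E}) (e : E) : slack D e -> tight D A -> e \notin A.
Proof. by move/forallP/(_ A)/implyP. Qed.

Lemma mem_dep_set (D A : {set E}) (e e' : E) :
  e' \in dep_set D e -> tight D A -> e \in A -> e' \in A.
Proof. by rewrite inE => /andP [_ /bigcapP e'A] tA eA; rewrite e'A ?tA. Qed.

Lemma dep_set_self (D : {set E}) (e : E) : e \in D -> e \in dep_set D e.
Proof. by move=> eD; rewrite inE eD; apply/bigcapP => A /andP []. Qed.

Lemma dep_set_slack (D : {set E}) (e : E) : slack D e -> dep_set D e = D.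
Proof.
move=> sl; apply/setIidPl/bigcapsP => A /andP [tA eA].
by have := slack_tight sl tA; rewrite eA.
Qed.

Lemma tight_sum_ge (D K B : {set E}) : monotone_fun f -> tight D K -> B \subset K ->
  {in K :\: B, forall e, phi e = 0} -> f B <= \sum_(e in B) phi e.
Proof.
move=> f_mono /andP [_ /eqP sumK] BK phi0; apply: le_trans (f_mono _ _ BK) _.
by rewrite -sumK (big_setID B) (setIidPr BK) /= [X in _ + X]big1 ?addr0.
Qed.

Variable D : {set E}.
Hypotheses (f0 : normalized f) (f_sub : submodular f)
  (cap : forall A : {set E}, A \subset D -> \sum_(e in A) phi e <= f A).

Lemma tight0 : tight D set0.
Proof. by rewrite /tight sub0set big_set0 f0 /=. Qed.

Lemma tight_setUI (A B : {set E}) : tight D A -> tight D B ->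
  tight D (A :|: B) /\ tight D (A :&: B).
Proof.
move=> /andP [AD /eqP sumA] /andP [BD /eqP sumB].
have UD : A :|: B \subset D by rewrite subUset AD.
have ID : A :&: B \subset D by apply: subset_trans (subsetIl A B) AD.
have := f_sub A B; have := cap UD; have := cap ID.
rewrite /tight UD ID -sumA -sumB -sum_setUI /= => capI capU modular.
by split; apply/eqP/le_anti; rewrite ?capI ?capU /=; lra.
Qed.

Lemma tight_bigcup (I : finType) (P : pred I) (F : I -> {set E}) :
  (forall i, P i -> tight D (F i)) -> tight D (\bigcup_(i | P i) F i).
Proof.
move=> tF; apply: (big_ind (tight D)) => // [|A B tA tB]; first exact: tight0.
by case: (tight_setUI tA tB).
Qed.

Lemma tight_dep_set (e : E) : ~~ slack D e -> tight D (dep_set D e).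
Proof.
case/forallPn => A0; rewrite negb_imply negbK => /andP [tA0 eA0].
rewrite /dep_set (bigD1 A0) /=; last by rewrite tA0.
rewrite setIA (setIidPr (tight_sub tA0)).
apply: (big_ind (fun X => tight D (A0 :&: X))) => [|X Y tX tY|A /andP [/andP [tA _] _]].
- by rewrite setIT.
- by rewrite setIIr; case: (tight_setUI tX tY).
- by case: (tight_setUI tA0 tA).
Qed.

End TightSets.

(** * The residual graph *)

Section Residual.
Variables (R : realType) (V E : finType) (tail head : E -> V) (s t : V)
  (f : {set E} -> R) (phi : E -> R).
Hypotheses (f0 : normalized f) (f_mono : monotone_fun f) (f_sub : submodular f)
  (flow_phi : is_polymatroidal_flow tail head f s t phi).

Local Notation value := (flow_value tail head s).
Let cap_in (v : V) (A : {set E}) :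
  A \subset fiber head v -> \sum_(e in A) phi e <= f A := flow_cap_in flow_phi.
Let cap_out (v : V) (A : {set E}) :
  A \subset fiber tail v -> \sum_(e in A) phi e <= f A := flow_cap_out flow_phi.
Let phi_ge0 (e : E) : 0 <= phi e. Proof. by case: flow_phi. Qed.
Local Notation tight_at g v := (tight f phi (fiber g v)).
Local Notation slack_at g e := (slack f phi (fiber g (g e)) e).
Local Notation dep_at g e := (dep_set f phi (fiber g (g e)) e).

Lemma tight_fiber (g : E -> V) (v : V) (A : {set E}) (e : E) :
  tight_at g v A -> e \in A -> g e = v.
Proof. by move/tight_sub/subsetP => AD /AD; rewrite inE => /eqP. Qed.

Lemma tight_at_mem (g : E -> V) (v : V) (A : {set E}) (e : E) :
  tight_at g v A -> e \in A -> tight_at g (g e) A.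
Proof. by move=> tA eA; rewrite (tight_fiber tA eA). Qed.

(* The arc [(e, true)] uses [e] forwards, from [tail e] to [head e]; the arc
   [(e, false)] cancels flow on [e], from [head e] to [tail e]. *)
Definition arc_src (z : E * bool) : V := if z.2 then tail z.1 else head z.1.
Definition arc_tgt (z : E * bool) : V := if z.2 then head z.1 else tail z.1.
Definition usable (z : E * bool) : bool := z.2 || (0 < phi z.1).
Definition departs (z : E * bool) : bool :=
  usable z && (z.2 ==> slack_at tail z.1).
Definition arrives (z : E * bool) : bool :=
  usable z && (z.2 ==> slack_at head z.1).

(* At the vertex joining two consecutive arcs, pushing more flow into (out of)
   a saturated edge must be compensated by cancelling flow on an edge of its
   dependent set; forward-to-forward steps need both edges unsaturated. *)
Definition residual_step : rel (E * bool) := fun x y =>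
  [&& arc_tgt x == arc_src y, usable y &
   match x.2, y.2 with
   | true, true => slack_at head x.1 && slack_at tail y.1
   | true, false => y.1 \in dep_at head x.1
   | false, true => x.1 \in dep_at tail y.1
   | false, false => true
   end].

Definition reachable (z : E * bool) : bool :=
  [exists x, [&& arc_src x == s, departs x & connect residual_step x z]].

Definition augmenting : bool :=
  [exists z, [&& arc_tgt z == t, arrives z & reachable z]].

Lemma reachable_step (x y : E * bool) :
  reachable x -> residual_step x y -> reachable y.
Proof.
case/existsP=> x0 /and3P [sx0 dx0 cx] sxy; apply/existsP; exists x0.
by rewrite sx0 dx0 (connect_trans cx (connect1 sxy)).
Qed.

Lemma path_usable (x : E * bool) (p : seq (E * bool)) :
  path residual_step x p -> usable x -> all usable (x :: p).
Proof.
elim: p x => [|y p IH] x /= => [_ -> //|/andP [/and3P [_ uy _] /IH py] ->].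
exact: py.
Qed.

Lemma reachable_usable (z : E * bool) : reachable z -> usable z.
Proof.
case/existsP=> x /and3P [_ /andP [ux _] /connectP [p px ->]].
by move/allP: (path_usable px ux); apply; exact: mem_last.
Qed.

Definition reached : {set V} :=
  [set v | (v == s) ||
    [exists z, [&& arc_tgt z == v, reachable z & z.2 ==> slack_at head z.1]]].

Lemma reachable_from (z : E * bool) :
  arc_src z \in reached -> departs z -> reachable z.
Proof.
rewrite inE => /orP [/eqP zs dz|/existsP [x /and3P [/eqP xz rx sx]] /andP [uz sz]].
  by apply/existsP; exists z; rewrite zs eqxx dz connect0.
apply: (reachable_step rx); rewrite /residual_step xz eqxx uz /=.
move: xz sx sz {rx uz}; case: x => e [] /=; case: z => e' [] //=.
all: rewrite /arc_tgt /arc_src /= => ee' se.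
- by move=> ->; rewrite se.
- by rewrite (dep_set_slack se) inE ee'.
- by move=> se'; rewrite (dep_set_slack se') inE ee'.
Qed.

Lemma reached_tgt (z : E * bool) :
  reachable z -> z.2 ==> slack_at head z.1 -> arc_tgt z \in reached.
Proof.
move=> rz sz; rewrite inE; apply/orP; right.
by apply/existsP; exists z; rewrite eqxx rz.
Qed.

Lemma source_reached : s \in reached.
Proof. by rewrite inE eqxx. Qed.

Lemma sink_not_reached : s != t -> ~~ augmenting -> t \notin reached.
Proof.
move=> st; apply: contra => /[!inE] /orP [/eqP ts|/existsP [z /and3P [tz rz sz]]].
  by rewrite ts eqxx in st.
by apply/existsP; exists z; rewrite tz rz andbT /arrives reachable_usable.
Qed.

Lemma flow_edges_in_reached (e : E) :
  e \in edges_in tail head reached -> phi e = 0.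
Proof.
rewrite inE => /andP [tS hS]; apply/eqP; rewrite eq_le.
rewrite phi_ge0 andbT leNgt; move: tS; apply: contra => pe.
apply: (reached_tgt (z := (e, false))) => //.
by apply: reachable_from; rewrite /departs /usable /= ?pe.
Qed.

Lemma value_reached : s != t -> ~~ augmenting ->
  value phi = \sum_(e in edges_out tail head reached) phi e.
Proof.
move=> st na.
rewrite (flow_value_across flow_phi source_reached (sink_not_reached st na)).
by rewrite [X in _ - X]big1 ?subr0 // => e /flow_edges_in_reached.
Qed.

Definition head_charged (w : V) : {set E} :=
  \bigcup_(e | [&& head e == w, reachable (e, true) & ~~ slack_at head e])
    dep_at head e.
Definition tail_charged (u : V) : {set E} :=
  \bigcup_(e | [&& tail e == u, ~~ reachable (e, true) & ~~ slack_at tail e])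
    dep_at tail e.

(* Every block of this partition of the cut
   lies in a tight set ([head_charged] or [tail_charged]) that carries no flow
   outside the block, so the cost of the block is at most its flow. *)
Definition charge : {ffun E -> bool} := [ffun e => e \notin head_charged (head e)].

Lemma head_charged_tight (w : V) : tight_at head w (head_charged w).
Proof.
rewrite /head_charged.
apply: (tight_bigcup f0 f_sub (@cap_in w)) => e /and3P [/eqP <- _].
by move=> nse; exact: (tight_dep_set f_sub (@cap_in (head e)) nse).
Qed.

Lemma tail_charged_tight (u : V) : tight_at tail u (tail_charged u).
Proof.
rewrite /tail_charged.
apply: (tight_bigcup f0 f_sub (@cap_out u)) => e /and3P [/eqP <- _].
by move=> nse; exact: (tight_dep_set f_sub (@cap_out (tail e)) nse).
Qed.

Lemma head_charged_reachable (w : V) (e : E) :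
  e \in head_charged w -> 0 < phi e -> reachable (e, false).
Proof.
case/bigcupP=> e1 /and3P [_ re1 _] ee1 pe; apply: (reachable_step re1).
have := ee1; rewrite inE => /andP [/[!inE] /eqP he _].
by rewrite /residual_step /arc_tgt /arc_src /usable /= he eqxx pe ee1.
Qed.

Local Notation block v := (part_block tail head (edges_out tail head reached) charge v).

Lemma block_sub_head_charged (v : V) :
  v \notin reached -> block v \subset head_charged v.
Proof.
move=> vS; apply/subsetP => e; rewrite inE ffunE => /andP [].
rewrite inE => /andP [tS _].
by case: ifP => [_ /eqP tv|/negbFE eK /eqP <-//]; rewrite -tv tS in vS.
Qed.

Lemma head_charged_unused (v : V) :
  v \notin reached -> {in head_charged v :\: block v, forall e, phi e = 0}.
Proof.
move=> vS e; rewrite inE => /andP [eB eK]; apply/eqP.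
rewrite eq_le phi_ge0 andbT leNgt; apply: contra eB => pe.
have he := tight_fiber (head_charged_tight v) eK.
have tS : tail e \in reached.
  exact: (reached_tgt (z := (e, false))) (head_charged_reachable eK pe) _.
by rewrite inE ffunE he eK /= eqxx andbT inE tS he vS.
Qed.

Lemma block_sub_tail_charged (v : V) :
  v \in reached -> block v \subset tail_charged v.
Proof.
move=> vS; apply/subsetP => e; rewrite inE ffunE => /andP [].
rewrite inE => /andP [tS hS].
case: ifP => [eK /eqP tv|_ /eqP hv]; last by rewrite hv vS in hS.
have nre : ~~ reachable (e, true).
  apply: contra eK => re; have nse : ~~ slack_at head e.
    by apply: contra hS => se; exact: (reached_tgt (z := (e, true))).
  apply/bigcupP; exists e; first by rewrite eqxx re nse.
  by apply: dep_set_self; rewrite inE.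
have nse : ~~ slack_at tail e.
  apply: contra nre => se; apply: reachable_from; first by rewrite /arc_src /= tv.
  by rewrite /departs /usable /= se.
apply/bigcupP; exists e; first by rewrite nre nse tv eqxx.
by apply: dep_set_self; rewrite inE.
Qed.

Lemma tail_charged_unused (v : V) :
  v \in reached -> {in tail_charged v :\: block v, forall e, phi e = 0}.
Proof.
move=> vS q; rewrite inE => /andP [qB qL]; apply/eqP.
rewrite eq_le phi_ge0 andbT leNgt; apply: contra qB => pq.
case/bigcupP: (qL) => e /and3P [_ nre _] qe.
have tq := tight_fiber (tail_charged_tight v) qL.
have nrq : ~~ reachable (q, false).
  apply: contra nre => rq; apply: (reachable_step rq).
  have := qe; rewrite inE => /andP []; rewrite inE => /eqP tqe _.
  by rewrite /residual_step /arc_tgt /arc_src /= tqe eqxx qe.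
have hS : head q \notin reached.
  apply: contra nrq => hS; apply: reachable_from => //.
  by rewrite /departs /usable /= pq.
have qK : q \notin head_charged (head q).
  by apply: contra nrq => qK; exact: head_charged_reachable qK pq.
by rewrite inE ffunE qK /= tq eqxx andbT inE tq vS hS.
Qed.

Lemma block_cost_le (v : V) : f (block v) <= \sum_(e in block v) phi e.
Proof.
have [vS|vS] := boolP (v \in reached).
  exact: tight_sum_ge f_mono (tail_charged_tight v) (block_sub_tail_charged vS)
    (tail_charged_unused vS).
exact: tight_sum_ge f_mono (head_charged_tight v) (block_sub_head_charged vS)
  (head_charged_unused vS).
Qed.

Lemma f_pf_le_value : s != t -> ~~ augmenting ->
  f_pf tail head f (edges_out tail head reached) <= value phi.
Proof.
move=> st na; rewrite (value_reached st na) (sum_part_block tail head _ charge).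
apply: le_trans (bigmin_le _ charge _) _.
by apply: ler_sum => v _; apply: block_cost_le.
Qed.

Definition arc_sign (z : E * bool) : R := if z.2 then 1 else -1.
Definition net_use (p : seq (E * bool)) (e : E) : R :=
  \sum_(z <- p) (if z.1 == e then arc_sign z else 0).
Definition forward_in (A : {set E}) (z : E * bool) : bool := z.2 && (z.1 \in A).
Definition backward_in (A : {set E}) (z : E * bool) : bool := ~~ z.2 && (z.1 \in A).

Lemma sum_net_use (A : {set E}) (p : seq (E * bool)) :
  \sum_(e in A) net_use p e =
  \sum_(z <- p) ((forward_in A z)%:R - (backward_in A z)%:R).
Proof.
rewrite exchange_big /=; apply: eq_bigr => z _.
rewrite /forward_in /backward_in; have [zA|zA] := boolP (z.1 \in A); last first.
  by rewrite !andbF subrr big1 // => e eA; case: eqP => // ze; rewrite ze eA in zA.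
rewrite (bigD1 z.1) //= eqxx big1 => [|e /andP [_ /negbTE]]; last first.
  by rewrite eq_sym => ->.
by rewrite !andbT addr0 /arc_sign; case: z.2; rewrite /= ?subr0 ?sub0r.
Qed.

Lemma net_use_balance (x : E * bool) (p : seq (E * bool)) (v : V) :
  path residual_step x p ->
  \sum_(e in fiber head v) net_use (x :: p) e -
  \sum_(e in fiber tail v) net_use (x :: p) e =
  (arc_tgt (last x p) == v)%:R - (arc_src x == v)%:R.
Proof.
move=> px; rewrite !sum_net_use -sumrB.
rewrite (eq_bigr (fun z => (arc_tgt z == v)%:R - (arc_src z == v)%:R)) => [|z _].
  by apply: sum_path_telescope px => y z /and3P [/eqP -> _ _].
rewrite /forward_in /backward_in /arc_tgt /arc_src !inE.
case: z.2; case: (head z.1 == v); case: (tail z.1 == v).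
all: by rewrite /= ?mulr0n ?mulr1n; lra.
Qed.

Lemma net_use_tight_in (x : E * bool) (p : seq (E * bool)) (v : V) (A : {set E}) :
  path residual_step x p -> arrives (last x p) -> tight_at head v A ->
  \sum_(e in A) net_use (x :: p) e <= 0.
Proof.
move=> px ar tA; rewrite sum_net_use.
apply: (sum_matched_forward _ (F := forward_in A) (B := backward_in A)) px _ => [y z|].
  case/and3P=> _ _; case: y => e [] //= + /andP [_ eA]; have tA' := tight_at_mem tA eA.
  case: z => e' [] /=.
    by case/andP=> se _; move: (slack_tight se tA'); rewrite eA.
  by move=> dep; rewrite /backward_in /= (mem_dep_set dep tA' eA).
move: ar; rewrite /arrives /usable /forward_in; case: (last x p) => e [] //= se.
by apply/negP => eA; move: (slack_tight se (tight_at_mem tA eA)); rewrite eA.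
Qed.

Lemma net_use_tight_out (x : E * bool) (p : seq (E * bool)) (v : V) (A : {set E}) :
  path residual_step x p -> departs x -> tight_at tail v A ->
  \sum_(e in A) net_use (x :: p) e <= 0.
Proof.
move=> px dx tA; rewrite sum_net_use.
apply: (sum_matched_backward _ (F := forward_in A) (B := backward_in A)) px _ => [y z|].
  case/and3P=> _ _; case: z => e [] //= + /andP [_ eA]; have tA' := tight_at_mem tA eA.
  case: y => e' [] /=.
    by case/andP=> _ se; move: (slack_tight se tA'); rewrite eA.
  by move=> dep; rewrite /backward_in /= (mem_dep_set dep tA' eA).
move: dx; rewrite /departs /usable /forward_in; case: x => e [] //= se.
by apply/negP => eA; move: (slack_tight se (tight_at_mem tA eA)); rewrite eA.
Qed.

Lemma net_use_neg (x : E * bool) (p : seq (E * bool)) (e : E) :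
  path residual_step x p -> usable x -> net_use (x :: p) e < 0 -> 0 < phi e.
Proof.
move=> px ux; apply: contraTT; rewrite -!leNgt => pe.
rewrite /net_use big_seq; apply: sumr_ge0 => z zp; case: eqP => // ze.
move/allP: (path_usable px ux) => /(_ z zp).
by rewrite /usable ze ltNge pe orbF /arc_sign => ->.
Qed.

Lemma augment : s != t -> augmenting ->
  exists2 phi' : E -> R,
    is_polymatroidal_flow tail head f s t phi' & value phi < value phi'.
Proof.
move=> st /existsP [z /and3P [/eqP tz az /existsP [x /and3P [/eqP sx dx]]]].
case/connectP=> p px zl; set d := net_use (x :: p).
have ux : usable x by case/andP: dx.
have [eps eps_gt0 [phi'_ge0 phi'_cap]] :=
  perturb_feasible f phi_ge0 (fun e => net_use_neg (e := e) px ux).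
have sumD (A : {set E}) : \sum_(e in A) (phi e + eps * d e) =
    \sum_(e in A) phi e + eps * \sum_(e in A) d e.
  by rewrite big_split mulr_sumr.
have balance v : \sum_(e in fiber head v) d e - \sum_(e in fiber tail v) d e =
    (t == v)%:R - (s == v)%:R.
  by rewrite net_use_balance // -zl tz sx.
exists (fun e => phi e + eps * d e); first split=> //= [v vs vt|v A sA|v A sA].
- have [_ conserve _ _] := flow_phi; rewrite !sumD conserve //; congr (_ + eps * _).
  by apply/eqP; rewrite -subr_eq0 balance ![_ == v]eq_sym (negbTE vs) (negbTE vt) subrr.
- apply: (phi'_cap _ (@cap_in v A sA)) => sumA.
  apply: (net_use_tight_in px); first by rewrite -zl.
  by rewrite /tight sumA eqxx andbT; exact: sA.
- apply: (phi'_cap _ (@cap_out v A sA)) => sumA.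
  apply: (net_use_tight_out px dx).
  by rewrite /tight sumA eqxx andbT; exact: sA.
rewrite /flow_value !sumD opprD addrACA -mulrBr ltrDl.
have : \sum_(e in fiber tail s) d e - \sum_(e in fiber head s) d e = 1.
  by rewrite -opprB balance eqxx eq_sym (negbTE st) /= sub0r opprK.
by move=> ->; rewrite mulr1.
Qed.

End Residual.

(** * Existence of a maximum flow *)

Section MaxFlowExists.
Import classical_sets boolp functions topology normedtype derive.
Import numFieldNormedType.Exports.
Local Open Scope classical_set_scope.
Variables (R : realType) (V E : finType) (tail head : E -> V) (s t : V)
  (f : {set E} -> R).
Hypothesis f_ge0 : nonneg_fun f.

Local Notation flow := (is_polymatroidal_flow tail head f s t).
Local Notation value := (flow_value tail head s).

Definition flow_of_row (x : 'rV[R]_#|E|) (e : E) : R := x ord0 (enum_rank e).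
Definition row_of_flow (phi : E -> R) : 'rV[R]_#|E| := \row_i phi (enum_val i).

Lemma row_of_flowK (phi : E -> R) : flow_of_row (row_of_flow phi) = phi.
Proof. by apply: funext => e; rewrite /flow_of_row mxE enum_rankK. Qed.

Lemma continuous_sum_coords (P : pred E) :
  continuous (fun x : 'rV[R]_#|E| => \sum_(e | P e) flow_of_row x e).
Proof.
rewrite -(fct_sumE _ _ (fun e x => flow_of_row x e)).
apply: (big_ind (fun g : 'rV[R]_#|E| -> R => continuous g)) => [|g h cg ch x|e _].
- by rewrite (_ : 0 = cst 0); [exact: cst_continuous | apply: funext].
- exact: (continuousD (cg x) (ch x)).
- exact: coord_continuous.
Qed.

Lemma closed_le_continuous (L1 L2 : 'rV[R]_#|E| -> R) :
  continuous L1 -> continuous L2 -> closed [set x | L1 x <= L2 x].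
Proof.
move=> c1 c2; have -> : [set x | L1 x <= L2 x] = (L2 - L1) @^-1` [set r | 0 <= r].
  by apply/seteqP; split=> x /=; rewrite subr_ge0.
apply: preimage_closed; last exact: closed_ge.
by move=> x _; exact: (continuousB (c2 x) (c1 x)).
Qed.

Definition flow_rows : set 'rV[R]_#|E| := [set x | flow (flow_of_row x)].

Lemma closed_flow_rows : closed flow_rows.
Proof.
pose sum_on (A : {set E}) x := \sum_(e in A) flow_of_row x e.
have c_sum A : continuous (sum_on A) by exact: continuous_sum_coords.
have -> : flow_rows =
    \bigcap_(e in setT) [set x | 0 <= flow_of_row x e] `&`
    \bigcap_(v in [set v | v != s /\ v != t])
      ([set x | sum_on (delta_in head v) x <= sum_on (delta_out tail v) x] `&`
       [set x | sum_on (delta_out tail v) x <= sum_on (delta_in head v) x]) `&`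
    \bigcap_(p in [set p : V * {set E} | p.2 \subset delta_in head p.1])
      [set x | sum_on p.2 x <= f p.2] `&`
    \bigcap_(p in [set p : V * {set E} | p.2 \subset delta_out tail p.1])
      [set x | sum_on p.2 x <= f p.2].
  apply/seteqP; split=> x.
    case=> ge0 conserve cin cout; split; [split; [split|]|].
    - by move=> e _; exact: ge0.
    - by move=> v [vs vt] /=; rewrite /sum_on (conserve v) ?lexx //; apply/negP.
    - by case=> v A /= sA; exact: cin sA.
    - by case=> v A /= sA; exact: cout sA.
  case=> [[[ge0 conserve] cin] cout]; split.
  - by move=> e; exact: ge0.
  - by move=> v vs vt; have [/= ? ?] := conserve v (conj vs vt); apply/le_anti/andP.
  - by move=> v A sA; exact: cin (v, A) sA.
  - by move=> v A sA; exact: cout (v, A) sA.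
have c_coord e : continuous (flow_of_row^~ e) by exact: coord_continuous.
apply: closedI; [apply: closedI; [apply: closedI|]|].
all: apply: closed_bigI => *.
all: try apply: closedI.
all: apply: closed_le_continuous => //; exact: cst_continuous.
Qed.

Lemma bounded_flow_rows : bounded_set flow_rows.
Proof.
have B0 : 0 <= \sum_e f [set e]%SET by apply: sumr_ge0 => e _; exact: f_ge0.
exists (\sum_e f [set e]%SET); split; first exact: num_real.
move=> M BM x [ge0 _ _ cout]; apply: le_trans (ltW BM).
rewrite [leLHS]/Num.norm /= mx_normrE; apply: bigmax_le => // -[i j] _ /=.
have -> : x i j = flow_of_row x (enum_val j) by rewrite /flow_of_row enum_valK (ord1 i).
rewrite ger0_norm //; apply: le_trans (_ : f [set enum_val j]%SET <= _).
  have := cout (tail (enum_val j)) [set enum_val j]%SET.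
  by rewrite big_set1; apply; rewrite finset.sub1set inE.
by rewrite (bigD1 (enum_val j)) //= lerDl; apply: sumr_ge0 => *; exact: f_ge0.
Qed.

Lemma exists_max_flow :
  exists2 phi, flow phi & forall phi', flow phi' -> value phi' <= value phi.
Proof.
have zero_flow : flow_rows (row_of_flow (fun=> 0)).
  rewrite /flow_rows /= row_of_flowK.
  by split=> [e|v _ _|v A _|v A _]; rewrite /= ?lexx ?big1 ?f_ge0.
have compact_rows := bounded_closed_compact bounded_flow_rows closed_flow_rows.
have cont_value : {within flow_rows, continuous (fun x => value (flow_of_row x))}.
  rewrite (_ : (fun x => _) = (fun x => \sum_(e in delta_out tail s) flow_of_row x e)
    - (fun x => \sum_(e in delta_in head s) flow_of_row x e)) //.
  apply: continuous_subspaceT => x.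
  have c_sum (A : {set E}) : continuous (fun x => \sum_(e in A) flow_of_row x e).
    exact: continuous_sum_coords.
  exact: (continuousB (c_sum _ x) (c_sum _ x)).
have [x x_flow x_max] := EVT_max_rV (ex_intro _ _ zero_flow) compact_rows cont_value.
exists (flow_of_row x); first by rewrite inE in x_flow.
move=> phi' fl'; rewrite -(row_of_flowK phi'); apply: x_max.
by rewrite inE /flow_rows /= row_of_flowK.
Qed.

End MaxFlowExists.

Theorem lemma6 (R : realType) (V E : finType) (tail head : E -> V) (s t : V)
  (f : {set E} -> R) :
  s != t ->
  normalized f -> nonneg_fun f -> monotone_fun f -> submodular f ->
  exists (C : {set E}) (phi : E -> R),
    [/\ is_st_cut tail head s t C,
        (forall C' : {set E}, is_st_cut tail head s t C' ->
           f_pf tail head f C <= f_pf tail head f C'),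
        is_polymatroidal_flow tail head f s t phi,
        (forall phi' : E -> R, is_polymatroidal_flow tail head f s t phi' ->
           flow_value tail head s phi' <= flow_value tail head s phi)
      & f_pf tail head f C = flow_value tail head s phi].
Proof.
move=> st f0 f_ge0 f_mono f_sub.
have [phi flow_phi phi_max] := exists_max_flow tail head s t f_ge0.
have no_aug : ~~ augmenting tail head s t f phi.
  by apply/negP => /(augment flow_phi st) [phi' /phi_max]; rewrite leNgt => /negP.
have cut := edges_out_cut tail head (source_reached tail head s f phi)
  (sink_not_reached st no_aug).
have cut_le := f_pf_le_value f0 f_mono f_sub flow_phi st no_aug.
exists (edges_out tail head (reached tail head s f phi)), phi.
split=> // [C' cut'|].
  exact: le_trans cut_le (weak_duality f_mono flow_phi cut').
by apply/le_anti; rewrite cut_le (weak_duality f_mono flow_phi cut).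
Qed.
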